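(* Let $N$ and $N_k$ be integers with $1\le N_k\le N$. For a vector $\boldsymbol{\zeta}_k=(\boldsymbol{\zeta}_k[1],\dots,\boldsymbol{\zeta}_k[N_k])$ of $N_k$ pairwise distinct elements of $\{1,\dots,N\}$, define its variance $$\bar{\boldsymbol\zeta}_k=\frac{1}{N_k}\sum_{n=1}^{N_k}\boldsymbol{\zeta}_k[n]^2-\frac{1}{N_k^2}\Big[\sum_{n=1}^{N_k}\boldsymbol{\zeta}_k[n]\Big]^2 .$$ Then, over all such vectors, $\bar{\boldsymbol\zeta}_k$ is maximized, and consequently the range Cramér–Rao bound $$\mathrm{CRB}(R)=\frac{c^2\sigma^2}{8|\beta|^2\pi^2 G_k N_k\Delta f^2\,\bar{\boldsymbol\zeta}_k}$$ is minimized, when the subcarriers are assigned according to the edge-first distribution.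
   Context: Here $c,\sigma,|\beta|,G_k,\Delta f$ are fixed positive constants (speed of light, noise standard deviation, magnitude of the path gain, number of sensing symbols, subcarrier spacing), so minimizing $\mathrm{CRB}(R)$ is equivalent to maximizing $\bar{\boldsymbol\zeta}_k$. The entries $\boldsymbol{\zeta}_k[n]$ are the indices of the subcarriers assigned to the user. The edge-first distribution is the one in which subcarriers nearest the two edges of the index range $\{1,\dots,N\}$ are preferentially assigned, i.e. the set of assigned indices is $\{1,\dots,a\}\cup\{N-b+1,\dots,N\}$ with $a+b=N_k$ and $|a-b|\le 1$ (e.g. for $N=48$, $N_k=16$: indices $1,\dots,8,41,\dots,48$). *)

From HB Require Import structures.
From mathcomp Require Import all_boot all_order all_algebra.
From mathcomp Require Import reals trigo.
Unset Printing Implicit Defensive.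
Import Order.TTheory GRing.Theory Num.Theory.
Local Open Scope ring_scope.

(* A subcarrier assignment vector zeta_k of length Nk: entry i (0-based index,
   i.e. zeta_k[i+1] in the paper) is a subcarrier index in {1..N}. *)
Definition valid_assign (N Nk : nat) (z : 'I_Nk -> nat) : Prop :=
  injective z /\ (forall i, (1 <= z i <= N)%N).

Definition zvar (R : realFieldType) (Nk : nat) (z : 'I_Nk -> nat) : R :=
  (\sum_i ((z i)%:R : R) ^+ 2) / Nk%:R
  - (\sum_i ((z i)%:R : R)) ^+ 2 / (Nk%:R ^+ 2).

Definition edge_first (N Nk a : nat) : 'I_Nk -> nat :=
  fun i => if (i < a)%N then (i.+1)%N else (N - Nk + i.+1)%N.

Definition CRB (R : realType) (c sigma beta G df : R) (Nk : nat) (zbar : R) : R :=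
  (c ^+ 2 * sigma ^+ 2) / (8 * beta ^+ 2 * pi ^+ 2 * G * Nk%:R * df ^+ 2 * zbar).

From HB Require Import structures.
From mathcomp Require Import all_boot all_order all_algebra.
From mathcomp Require Import reals trigo.
From mathcomp Require Import ring lra zify.
Import Order.TTheory GRing.Theory Num.Theory.
Local Open Scope ring_scope.

(* Write n = a + b for the number of subcarriers and D(f) = n * sum f_i^2 - (sum f_i)^2,
   which is n^2 times the variance.  An injective z with values in {1..N} splits as
   z = r + y, where r_i is the rank of z_i among the entries of z (a permutation of
   {0..n-1}) and the offset y takes values in [1, M] with M = N - n + 1; the edge-first
   vector is likewise i + e_i with e = 1 on the a lowest ranks and e = M on the b highest.
   Expand D(r + y) = D(r) + 2 C(r, y) + D(y) with the bilinear C: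
   - D(r) = D(id) since r is a permutation;
   - C(r, y) <= C(id, e) term by term, because the weight n r_i - sum_k k of y_i is
     nonpositive on the a lowest ranks and nonnegative on the b highest ones;
   - D(y) <= ab (M - 1)^2 = D(e): the square root of D is a seminorm and y - 1 is a sum
     of M - 1 vectors with entries in {0,1}, each with D = c (n - c) <= ab.  The
     triangle inequality is used in the squared form
     t D(f + g) <= t (t + 1) D(f) + (t + 1) D(g), i.e. (t p - q)^2 >= 0.
   Finally the CRB is decreasing in the variance, which is positive as soon as n >= 2. *)

Section Dispersion.

Context {R : realFieldType} {n : nat}.
Implicit Types (f g : 'I_n -> R).

Definition dispersion f : R := n%:R * \sum_i f i ^+ 2 - (\sum_i f i) ^+ 2.

Definition codispersion f g : R :=
  n%:R * \sum_i (f i * g i) - (\sum_i f i) * (\sum_i g i).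

Lemma eq_dispersion f g : f =1 g -> dispersion f = dispersion g.
Proof.
move=> fg; rewrite /dispersion.
under eq_bigr do rewrite fg.
by under [X in _ - X ^+ 2]eq_bigr do rewrite fg.
Qed.

Lemma dispersion_pairwise f :
  2 * dispersion f = \sum_i \sum_j (f i - f j) ^+ 2.
Proof.
have row i : \sum_j (f i - f j) ^+ 2 =
    n%:R * f i ^+ 2 - 2 * f i * \sum_j f j + \sum_j f j ^+ 2.
  under eq_bigr do rewrite sqrrB.
  rewrite big_split /= sumrB sumr_const card_ord sumrMnl -mulr_sumr.
  by rewrite -mulr_natl -[_ *+ 2]mulr_natl; ring.
rewrite (eq_bigr _ (fun i _ => row i)) big_split /= sumrB.
rewrite -mulr_sumr -mulr_suml -mulr_sumr sumr_const card_ord -mulr_natl.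
by rewrite /dispersion; ring.
Qed.

Lemma dispersion_gt0 f i j : f i != f j -> 0 < dispersion f.
Proof.
move=> fij; suff : 0 < 2 * dispersion f by rewrite pmulr_rgt0.
have sq_gt0 : 0 < (f i - f j) ^+ 2 by rewrite exprn_even_gt0 // subr_eq0.
rewrite dispersion_pairwise (bigD1 i) //= (bigD1 j) //= -addrA.
apply: (lt_le_trans sq_gt0); rewrite lerDl addr_ge0 //.
  by apply: sumr_ge0 => k _; apply: sqr_ge0.
by do 2!apply: sumr_ge0 => ? _; apply: sqr_ge0.
Qed.

Lemma dispersionD f g :
  dispersion (fun i => f i + g i) =
  dispersion f + 2 * codispersion f g + dispersion g.
Proof.
rewrite /dispersion /codispersion.
under eq_bigr do rewrite sqrrD.
by rewrite !big_split /=; ring.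
Qed.

Lemma dispersion_shift f c : dispersion (fun i => f i + c) = dispersion f.
Proof.
rewrite dispersionD /codispersion /dispersion !sumr_const card_ord -mulr_suml.
ring.
Qed.

Lemma dispersion_perm f (r : 'I_n -> 'I_n) :
  injective r -> dispersion (fun i => f (r i)) = dispersion f.
Proof.
move=> r_inj; rewrite /dispersion.
by congr (_ * _ - _ ^+ 2); rewrite [RHS](reindex_inj r_inj).
Qed.

Lemma codispersionE f g :
  codispersion f g = \sum_i g i * (n%:R * f i - \sum_j f j).
Proof.
rewrite /codispersion !mulr_sumr -sumrB.
by apply: eq_bigr => i _; ring.
Qed.

Lemma dispersionD_le f g t : 0 <= t ->
  t * dispersion (fun i => f i + g i) <=
  t * (t + 1) * dispersion f + (t + 1) * dispersion g.
Proof.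
move=> t_ge0.
suff : t * (2 * dispersion (fun i => f i + g i)) <=
       t * (t + 1) * (2 * dispersion f) + (t + 1) * (2 * dispersion g) by lra.
rewrite !dispersion_pairwise !mulr_sumr -big_split; apply: ler_sum => i _.
rewrite !mulr_sumr -big_split; apply: ler_sum => j _ /=.
set p := f i - f j; set q := g i - g j.
have -> : f i + g i - (f j + g j) = p + q by rewrite /p /q; ring.
rewrite -subr_ge0.
have -> : t * (t + 1) * p ^+ 2 + (t + 1) * q ^+ 2 - t * (p + q) ^+ 2 =
          (t * p - q) ^+ 2 by ring.
exact: sqr_ge0.
Qed.

End Dispersion.

Lemma mul2_sum_ord (R : realFieldType) m :
  2 * \sum_(i < m) (i%:R : R) = m%:R * (m%:R - 1).
Proof.
elim: m => [|m IH]; first by rewrite big_ord0; ring.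
by rewrite big_ord_recr /= mulrDr IH -natr1; ring.
Qed.

Section Balanced.

Variables (R : realFieldType) (a b : nat).
Hypotheses (a_le : (a <= b.+1)%N) (b_le : (b <= a.+1)%N).

Lemma leq_balanced_mul c : (c * (a + b) <= a * b + c * c)%N.
Proof. by have [] := leqP c a; have [] := leqP c b; nia. Qed.

Lemma dispersion_bool_le (x : 'I_(a + b) -> bool) :
  dispersion (fun i => (x i)%:R : R) <= (a * b)%:R.
Proof.
have sq_id i : ((x i)%:R : R) ^+ 2 = (x i)%:R.
  by case: (x i); rewrite ?expr1n ?expr0n.
rewrite /dispersion (eq_bigr _ (fun i _ => sq_id i)) -natr_sum.
have := leq_balanced_mul (\sum_i x i); rewrite -(@ler_nat R) !natrM !natrD.
by rewrite expr2; lra.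
Qed.

Lemma dispersion_box_le K (f : 'I_(a + b) -> nat) : (forall i, f i <= K)%N ->
  dispersion (fun i => (f i)%:R : R) <= (a * b)%:R * K%:R ^+ 2.
Proof.
elim: K f => [|K IH] f f_le.
  rewrite (@eq_dispersion _ _ _ (fun _ => 0)) => [|i]; last first.
    by have := f_le i; rewrite leqn0 => /eqP ->.
  by rewrite /dispersion !big1 // => [|i _]; rewrite ?expr0n /=; lra.
pose x i := (0 < f i)%N; pose u i := (f i - x i)%N.
have f_split i : f i = (x i + u i)%N by rewrite /u /x; case: (f i) => //= k; lia.
have u_le i : (u i <= K)%N by have := f_le i; rewrite /u /x; case: (f i) => //= k; lia.
have [K0|K_gt0] := posnP K.
  rewrite (@eq_dispersion _ _ _ (fun i => (x i)%:R)) => [|i]; last first.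
    by rewrite f_split (_ : u i = 0)%N ?addn0 //; apply/eqP; rewrite -leqn0 -K0.
  by rewrite K0 expr1n mulr1; apply: dispersion_bool_le.
have K_pos : (0 : R) < K%:R by rewrite ltr0n.
rewrite -(ler_pM2l K_pos) (@eq_dispersion _ _ _ (fun i => (x i)%:R + (u i)%:R)); last first.
  by move=> i; rewrite f_split natrD.
have Dxu := dispersionD_le (fun i => (x i)%:R) (fun i => (u i)%:R) _ (ltW K_pos).
have Dx := ler_wpM2l (mulr_ge0 (ltW K_pos) (ler0n R K.+1)) (dispersion_bool_le x).
have Du := ler_wpM2l (ler0n R K.+1) (IH u u_le).
rewrite -natr1 in Dx Du *.
lra.
Qed.

Definition edge_profile (M k : nat) : nat := if (k < a)%N then 1%N else M.

Lemma dispersion_edge_profile M :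
  dispersion (fun i : 'I_(a + b) => (edge_profile M i)%:R : R) =
  (a * b)%:R * (M%:R - 1) ^+ 2.
Proof.
have edge_lo (i : 'I_a) : edge_profile M i = 1%N by rewrite /edge_profile ltn_ord.
have edge_hi (i : 'I_b) : edge_profile M (a + i) = M.
  by rewrite /edge_profile ltnNge leq_addr.
have sum_edge (F : nat -> R) :
    \sum_(i < a + b) F (edge_profile M i) = a%:R * F 1%N + b%:R * F M.
  rewrite big_split_ord /=.
  under eq_bigr do rewrite edge_lo.
  under [X in _ + X]eq_bigr do rewrite edge_hi.
  by rewrite !sumr_const !card_ord !mulr_natl.
rewrite /dispersion (sum_edge (fun k => k%:R ^+ 2)) (sum_edge (fun k => k%:R)) natrM.
ring.
Qed.

Lemma codispersion_rank_le M (r : 'I_(a + b) -> 'I_(a + b)) (y : 'I_(a + b) -> nat) :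
    injective r -> (forall i, 1 <= y i <= M)%N ->
  codispersion (fun i => (r i)%:R) (fun i => (y i)%:R : R) <=
  codispersion (fun i : 'I_(a + b) => i%:R) (fun i => (edge_profile M i)%:R).
Proof.
move=> r_inj y_range.
set S := \sum_(k < a + b) (k%:R : R).
have S_r : \sum_i ((r i)%:R : R) = S by rewrite /S [RHS](reindex_inj r_inj).
rewrite !codispersionE S_r -/S [X in _ <= X](reindex_inj r_inj).
apply: ler_sum => i _; have := y_range i; have := ltn_ord (r i).
move: (y i) (nat_of_ord (r i)) => t k k_lt /andP[t_ge1 t_leM].
have twoS := mul2_sum_ord R (a + b); rewrite -/S in twoS.
have n_ge0 : (0 : R) <= (a + b)%:R := ler0n _ _.
rewrite /edge_profile; case: ltnP => [k_lt_a|k_ge_a].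
  have : ((2 * k + 1)%:R <= (a + b)%:R :> R) by rewrite ler_nat; lia.
  rewrite (natrD _ (2 * k)) natrM => k_low.
  have centred_le0 : (a + b)%:R * k%:R - S <= 0 by nra.
  by move: t_ge1; rewrite -(ler_nat R); nra.
have : ((a + b)%:R <= (2 * k + 1)%:R :> R) by rewrite ler_nat; lia.
rewrite (natrD _ (2 * k)) natrM => k_high.
have centred_ge0 : 0 <= (a + b)%:R * k%:R - S by nra.
by move: t_leM; rewrite -(ler_nat R); nra.
Qed.

Lemma dispersion_rank_offset_le M (r : 'I_(a + b) -> 'I_(a + b)) (y : 'I_(a + b) -> nat) :
    (0 < M)%N -> injective r -> (forall i, 1 <= y i <= M)%N ->
  dispersion (fun i => (r i + y i)%:R : R) <=
  dispersion (fun i : 'I_(a + b) => (i + edge_profile M i)%:R).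
Proof.
move=> M_gt0 r_inj y_range.
rewrite (@eq_dispersion _ _ _ (fun i => (r i)%:R + (y i)%:R)) => [|i]; last exact: natrD.
rewrite [X in _ <= X](@eq_dispersion _ _ _
  (fun i => (nat_of_ord i)%:R + (edge_profile M i)%:R)) => [|i]; last exact: natrD.
rewrite !dispersionD (dispersion_perm (fun k => k%:R) _ r_inj) dispersion_edge_profile.
have codisp_le := codispersion_rank_le _ _ _ r_inj y_range.
have disp_y_le : dispersion (fun i => (y i)%:R : R) <= (a * b)%:R * (M%:R - 1) ^+ 2.
  rewrite (@eq_dispersion _ _ _ (fun i => (y i - 1)%:R + 1)); last first.
    by move=> i; rewrite natr1 subn1 prednK //; case/andP: (y_range i).
  have -> : M%:R - 1 = (M - 1)%:R :> R by rewrite natrB.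
  rewrite dispersion_shift; apply: dispersion_box_le => i.
  by have := y_range i; lia.
lra.
Qed.

End Balanced.

Lemma card_le_interval n (z : 'I_n -> nat) (A : {pred 'I_n}) lo k :
  injective z -> (forall j, j \in A -> lo <= z j < lo + k)%N -> (#|A| <= k)%N.
Proof.
move=> z_inj zA; rewrite cardE -(size_map z) -[k](size_iota lo).
apply: uniq_leq_size; first by rewrite (map_inj_uniq z_inj) enum_uniq.
by move=> v /mapP[j]; rewrite mem_enum => /zA zj ->; rewrite mem_iota.
Qed.

Section Rank.

Local Open Scope nat_scope.

Context {n N : nat} (z : 'I_n -> nat).
Hypotheses (z_inj : injective z) (z_range : forall i, 1 <= z i <= N).

Definition below i : {pred 'I_n} := [pred j | z j < z i].

Lemma card_below_lt i : #|below i| < n.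
Proof.
rewrite -[X in _ < X](card_ord n) -(cardC (below i)) -addn1 leq_add2l.
by apply/card_gt0P; exists i; rewrite !inE ltnn.
Qed.

Definition rank i : 'I_n := Ordinal (card_below_lt i).

Lemma rank_mono i j : z i < z j -> rank i < rank j.
Proof.
move=> lt_ij; apply: proper_card; apply/properP; split.
  by apply/subsetP => k; rewrite !inE => /ltn_trans; apply.
by exists i; rewrite !inE ?lt_ij ?ltnn.
Qed.

Lemma rank_inj : injective rank.
Proof.
move=> i j /(congr1 val) eq_r; case: (ltngtP (z i) (z j)) => [lt|lt|]; last exact: z_inj.
  by have := rank_mono _ _ lt; rewrite eq_r ltnn.
by have := rank_mono _ _ lt; rewrite eq_r ltnn.
Qed.

Lemma rank_lt i : rank i < z i.
Proof.
have := z_range i; suff : #|below i| <= z i - 1 by rewrite /=; lia.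
apply: (@card_le_interval _ _ _ 1 _ z_inj) => j; rewrite inE => lt_ji.
by have := z_range j; lia.
Qed.

Lemma rank_ge i : z i + n <= N + (rank i).+1.
Proof.
rewrite -[X in _ + X](card_ord n) -(cardC (below i)) /=.
suff : #|[predC below i]| <= N.+1 - z i by have := z_range i; lia.
apply: (@card_le_interval _ _ _ (z i) _ z_inj) => j; rewrite !inE -leqNgt => le_ij.
by have := z_range i; have := z_range j; lia.
Qed.

End Rank.

Lemma edge_first_valid N Nk a : (Nk <= N)%N -> valid_assign N Nk (edge_first N Nk a).
Proof.
move=> Nk_le; split.
  move=> i j; rewrite /edge_first => eq_ij; apply: val_inj => /=.
  have := ltn_ord i; have := ltn_ord j.
  by move: eq_ij; case: (ltnP i a); case: (ltnP j a); lia.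
by move=> i; rewrite /edge_first; have := ltn_ord i; case: (ltnP i a); lia.
Qed.

Lemma edge_firstE N Nk a (i : 'I_Nk) :
  edge_first N Nk a i = (i + edge_profile a (N - Nk + 1) i)%N.
Proof. by rewrite /edge_first /edge_profile; case: ltnP; lia. Qed.

Lemma dispersion_le_edge_first (R : realFieldType) N a b (z : 'I_(a + b) -> nat) :
    (a <= b.+1)%N -> (b <= a.+1)%N -> valid_assign N (a + b) z ->
  dispersion (fun i => (z i)%:R : R) <=
  dispersion (fun i => (edge_first N (a + b) a i)%:R).
Proof.
move=> a_le b_le [z_inj z_range].
pose y i := (z i - rank z i)%N.
have z_split i : z i = (rank z i + y i)%N.
  by rewrite /y subnKC // ltnW // (rank_lt _ z_inj z_range).
rewrite (@eq_dispersion _ _ _ (fun i => (rank z i + y i)%N%:R)) => [|i].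
  rewrite [X in _ <= X](@eq_dispersion _ _ _
    (fun i => (i + edge_profile a (N - (a + b) + 1) i)%N%:R)) => [|i].
    apply: dispersion_rank_offset_le => //; [by rewrite addn1 | exact: rank_inj | move=> i].
    by have := rank_lt _ z_inj z_range i; have := rank_ge _ z_inj z_range i; rewrite /y; lia.
  by rewrite edge_firstE.
by rewrite -z_split.
Qed.

Lemma zvarE (R : realFieldType) n (z : 'I_n -> nat) : (0 < n)%N ->
  zvar R n z = dispersion (fun i => (z i)%:R : R) / n%:R ^+ 2.
Proof. by move=> n_gt0; rewrite /zvar /dispersion; field; rewrite pnatr_eq0 -lt0n. Qed.

Lemma zvar_eq0 (R : realFieldType) n (z : 'I_n -> nat) : (n <= 1)%N -> zvar R n z = 0.
Proof.
case: n z => [|[|//]] z _; rewrite /zvar ?big_ord0 ?big_ord1.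
  by rewrite expr0n /= !mul0r subrr.
by rewrite expr1n divr1 subrr.
Qed.

Lemma zvar_gt0 (R : realFieldType) n (z : 'I_n -> nat) :
  (1 < n)%N -> injective z -> 0 < zvar R n z.
Proof.
move=> n_gt1 z_inj; rewrite zvarE ?(ltnW n_gt1) //.
apply: divr_gt0; last by rewrite exprn_gt0 // ltr0n (ltnW n_gt1).
apply: (@dispersion_gt0 _ _ _ (Ordinal (ltnW n_gt1)) (Ordinal n_gt1)).
by rewrite eqr_nat (inj_eq z_inj).
Qed.

Lemma ler_CRB (R : realType) c sigma beta G df Nk z1 z2 :
    0 < beta -> 0 < G -> 0 < df -> (0 < Nk)%N -> 0 < z1 -> z1 <= z2 ->
  CRB R c sigma beta G df Nk z2 <= CRB R c sigma beta G df Nk z1.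
Proof.
move=> beta_gt0 G_gt0 df_gt0 Nk_gt0 z1_gt0 z12; rewrite /CRB.
set k := 8 * _ * _ * _ * _ * _.
have k_gt0 : 0 < k by do !apply: mulr_gt0; rewrite ?ltr0n ?pi_gt0.
apply: ler_wpM2l; first by rewrite mulr_ge0 ?sqr_ge0.
have kz1_gt0 := mulr_gt0 k_gt0 z1_gt0.
have kz2_gt0 := mulr_gt0 k_gt0 (lt_le_trans z1_gt0 z12).
by rewrite lef_pV2 ?posrE // ler_pM2l.
Qed.

Theorem proposition2 (R : realType) (N Nk a b : nat)
  (hNk : (1 <= Nk <= N)%N) (hab : (a + b)%N = Nk)
  (hbal : (a <= b.+1)%N /\ (b <= a.+1)%N)
  (c sigma beta G df : R)
  (hc : 0 < c) (hs : 0 < sigma) (hb : 0 < beta) (hG : 0 < G) (hdf : 0 < df) :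
  valid_assign N Nk (edge_first N Nk a) /\
  (forall z : 'I_Nk -> nat, valid_assign N Nk z ->
     zvar R Nk z <= zvar R Nk (edge_first N Nk a)) /\
  (forall z : 'I_Nk -> nat, valid_assign N Nk z ->
     CRB R c sigma beta G df Nk (zvar R Nk (edge_first N Nk a))
     <= CRB R c sigma beta G df Nk (zvar R Nk z)).
Proof.
subst Nk; case: hbal => a_le b_le; case/andP: hNk => n_gt0 n_le.
have zvar_le z : valid_assign N (a + b) z ->
    zvar R (a + b) z <= zvar R (a + b) (edge_first N (a + b) a).
  move=> z_valid; rewrite !zvarE // ler_pM2r ?invr_gt0 ?exprn_gt0 ?ltr0n //.
  exact: dispersion_le_edge_first.
split; first exact: edge_first_valid.
split=> // z z_valid.
have [n_le1|n_gt1] := leqP (a + b) 1; first by rewrite !zvar_eq0.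
apply: ler_CRB; rewrite ?zvar_le //.
by apply: zvar_gt0 => //; case: z_valid.
Qed.
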